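(* Let the setting, Assumption A and Assumption B below hold, with agents and data sampled without replacement, and let $w_i$ be the iterates generated by the ISFedAvg algorithm below, with $\widetilde w_i=w^o-w_i$. For sufficiently small step-size $\mu$, the mean-square error converges exponentially fast: $$\mathbb{E}\|\widetilde w_i\|^2\le O\big((\lambda')^i\big)+O(\mu)\big(\sigma_s^2+\xi^2\big)+O(\mu^2)\frac1K\sum_{k=1}^K\sigma_{q,k}^2,$$ where $\lambda'=1-O(\mu)+O(\mu^2)\in[0,1)$, and $$\sigma_s^2=\frac{1}{K^2}\sum_{k=1}^K\frac{1}{p_k}\Big\{\sigma_{s,k}^2+\Big(3+\frac{6}{E_kB_k}\Big)\|\nabla_wP_k(w^o)\|^2\Big\},\quad \sigma_{s,k}^2=\frac{6}{E_kB_kN_k^2}\sum_{n=1}^{N_k}\frac{1}{p_n^{(k)}}\|\nabla_wQ_k(w^o;x_{k,n})\|^2,$$ $$\sigma_{q,k}^2=\frac{3}{B_kN_k^2}\sum_{n=1}^{N_k}\frac{1}{p_n^{(k)}}\|\nabla_wQ_k(w_k^o;x_{k,n})\|^2.$$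
   Context: There are $K$ agents; agent $k$ holds data points $x_{k,1},\dots,x_{k,N_k}$, a loss $Q_k(w;x)$ differentiable in $w\in\mathbb{R}^M$, and the empirical risk $P_k(w)=\frac1{N_k}\sum_{n=1}^{N_k}Q_k(w;x_{k,n})$. Let $w^o=\arg\min_w\frac1K\sum_kP_k(w)$ and $w_k^o=\arg\min_wP_k(w)$. Assumption A: each $P_k$ is $\nu$-strongly convex ($\nu>0$), each $Q_k(\cdot;x_{k,n})$ is convex with $\delta$-Lipschitz gradient. Assumption B: $\|w_k^o-w^o\|\le\xi$ for all $k$. ISFedAvg with step-size $\mu>0$ and initial point $w_0$: at iteration $i=1,2,\dots$, select $L$ agents $\mathcal{L}_i$ from $\{1,\dots,K\}$ without replacement with $\mathbb{P}(k\in\mathcal{L}_i)=Lp_k$ ($p_k>0$, $\sum_kp_k=1$); each $k\in\mathcal{L}_i$ sets $w_{k,0}=w_{i-1}$ and for $e=1,\dots,E_k$ draws a mini-batch $\mathcal{B}_{k,e}$ of $B_k$ indices from $\{1,\dots,N_k\}$ without replacement with $\mathbb{P}(n\in\mathcal{B}_{k,e})=B_kp_n^{(k)}$ ($p_n^{(k)}>0$, $\sum_np_n^{(k)}=1$), independently of the past, and updates $w_{k,e}=w_{k,e-1}-\frac{\mu}{Kp_kE_kB_k}\sum_{b\in\mathcal{B}_{k,e}}\frac{1}{N_kp_b^{(k)}}\nabla_wQ_k(w_{k,e-1};x_{k,b})$; then $w_i=\frac1L\sum_{k\in\mathcal{L}_i}w_{k,E_k}$. The inclusion probabilities are fixed across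 iterations. The notation $O(\mu^a)$ (resp. $O((\lambda')^i)$) denotes a term bounded by $C\mu^a$ (resp. $C(\lambda')^i$) with $C$ independent of $\mu$ and $i$ (it may depend on the problem data, inclusion probabilities and initialization). *)

From HB Require Import structures.
From mathcomp Require Import all_boot all_order all_algebra.
From mathcomp Require Import all_classical all_reals all_analysis.
Set Implicit Arguments. Unset Strict Implicit. Unset Printing Implicit Defensive.
Import Order.TTheory GRing.Theory Num.Theory.
Import numFieldNormedType.Exports.
Local Open Scope ring_scope.

Section ISFedAvg.
Variables (R : realType) (M : nat).
Notation vec := 'rV[R]_M.

Definition dot (u v : vec) : R := (u *m v^T) 0 0.
Definition norm2 (v : vec) : R := dot v v.

Definition convex_fun (f : vec -> R) : Prop :=
  forall (u v : vec) (t : R), 0 <= t <= 1 ->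
    f (t *: u + (1 - t) *: v) <= t * f u + (1 - t) * f v.

Definition strongly_convex (nu : R) (f : vec -> R) : Prop :=
  forall (u v : vec) (t : R), 0 <= t <= 1 ->
    f (t *: u + (1 - t) *: v)
      <= t * f u + (1 - t) * f v - nu / 2 * t * (1 - t) * norm2 (u - v).

Definition has_gradient (f : vec -> R) (g : vec -> vec) : Prop :=
  forall w : vec, differentiable f w /\ forall v : vec, 'd f w v = dot (g w) v.

Definition lipschitz_grad (delta : R) (g : vec -> vec) : Prop :=
  forall u v : vec, norm2 (g u - g v) <= delta ^+ 2 * norm2 (u - v).

Definition is_minimizer (f : vec -> R) (w : vec) : Prop :=
  forall v : vec, f w <= f v.

(* a sampling design without replacement over subsets of a finite set:
   a probability distribution on subsets of size n with first-order
   inclusion probabilities P(j in A) = n * p j *)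
Definition sampling_design (T : finType) (n : nat) (p : T -> R)
    (pi : {set T} -> R) : Prop :=
  [/\ forall A, 0 <= pi A,
      \sum_(A : {set T}) pi A = 1,
      forall A, pi A != 0 -> #|A| = n
    & forall j, \sum_(A : {set T} | j \in A) pi A = n%:R * p j].

(* finite discrete distributions on R^M, as lists of (weight, point) *)
Definition fdist := seq (R * vec).
Definition fexp (d : fdist) (f : vec -> R) : R := \sum_(x <- d) x.1 * f x.2.
Definition fbind (d : fdist) (g : vec -> fdist) : fdist :=
  flatten [seq [seq (x.1 * y.1, y.2) | y <- g x.2] | x <- d].

Variable K : nat.
Variables (N : 'I_K -> nat) (gQ : forall k : 'I_K, 'I_(N k) -> vec -> vec).
Variables (p : 'I_K -> R) (pn : forall k : 'I_K, 'I_(N k) -> R).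
Variables (E B : 'I_K -> nat) (L : nat) (mu : R).
Variables (piL : {set 'I_K} -> R) (piB : forall k : 'I_K, {set 'I_(N k)} -> R).

Definition local_update (k : 'I_K) (A : {set 'I_(N k)}) (w : vec) : vec :=
  w - (mu / (K%:R * p k * (E k)%:R * (B k)%:R)) *:
      \sum_(b in A) (((N k)%:R * pn b)^-1 *: gQ b w).

(* distribution of w_{k,e} given w_{k,0} = w; mini-batches drawn
   independently at each local step with design piB k *)
Fixpoint local_run (k : 'I_K) (e : nat) (w : vec) : fdist :=
  match e with
  | 0 => [:: (1, w)]
  | e'.+1 => fbind (local_run k e' w)
      (fun v => [seq (piB A, local_update A v) | A <- enum [set: {set 'I_(N k)}]])
  end.

(* distribution of sum_{k in ks} w_{k,E_k}, local runs independent across agents *)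
Fixpoint sum_local (ks : seq 'I_K) (w : vec) : fdist :=
  match ks with
  | [::] => [:: (1, 0)]
  | k :: ks' => fbind (local_run k (E k) w)
      (fun u => [seq (x.1, u + x.2) | x <- sum_local ks' w])
  end.

(* distribution of w_i given w_{i-1} = w: agents sampled with design piL *)
Definition fed_step (w : vec) : fdist :=
  flatten [seq [seq (piL A * x.1, (L%:R)^-1 *: x.2) | x <- sum_local (enum A) w]
          | A <- enum [set: {set 'I_K}]].

Fixpoint isfedavg (i : nat) (w0 : vec) : fdist :=
  match i with
  | 0 => [:: (1, w0)]
  | i'.+1 => fbind (isfedavg i' w0) fed_step
  end.

Definition emp_risk (Q : forall k : 'I_K, 'I_(N k) -> vec -> R) (k : 'I_K) (w : vec) : R :=
  ((N k)%:R)^-1 * \sum_(n < N k) Q k n w.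
Definition grad_risk (k : 'I_K) (w : vec) : vec :=
  ((N k)%:R)^-1 *: \sum_(n < N k) gQ n w.

Definition sigma_sk2 (k : 'I_K) (wo : vec) : R :=
  6 / ((E k)%:R * (B k)%:R * (N k)%:R ^+ 2) *
  \sum_(n < N k) (pn n)^-1 * norm2 (gQ n wo).
Definition sigma_s2 (wo : vec) : R :=
  ((K%:R) ^+ 2)^-1 * \sum_(k < K) (p k)^-1 *
    (sigma_sk2 k wo + (3 + 6 / ((E k)%:R * (B k)%:R)) * norm2 (grad_risk k wo)).
Definition sigma_qk2 (k : 'I_K) (wko : vec) : R :=
  3 / ((B k)%:R * (N k)%:R ^+ 2) * \sum_(n < N k) (pn n)^-1 * norm2 (gQ n wko).

End ISFedAvg.

From Pilot Require Import Defs.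
From HB Require Import structures.
From mathcomp Require Import all_boot all_order all_algebra.
From mathcomp Require Import all_classical all_reals all_analysis.
From mathcomp Require Import ring lra.
Import Order.TTheory GRing.Theory Num.Theory.
Import numFieldNormedType.Exports.
Set Implicit Arguments. Unset Strict Implicit. Unset Printing Implicit Defensive.
Local Open Scope ring_scope.

(* Thanks to the importance
   weights, a local step of agent k moves w on average by
   [local_rate mu k *: grad_risk gQ k w], with a second moment of order mu^2;
   after E_k such steps and averaging over the sampled agents (whose inclusion
   probabilities again remove the bias), w - wo drifts by
   (mu / K) * sum_k grad P_k(w) up to O(mu^2) terms.  Strong monotonicity of
   the gradients and sum_k grad P_k(wo) = 0 turn this into the contraction
   E||wo - w_i||^2 <= (1 - nu mu + C mu^2) ||wo - w_(i-1)||^2 + C mu^2 sigma_s^2,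
   and unrolling it for small mu leaves the noise floor
   C mu^2 sigma_s^2 / (1 - lambda) = O(mu) sigma_s^2. *)

Lemma ler_sumr_term (R : numDomainType) (I : finType) (F : I -> R) i :
  (forall j, 0 <= F j) -> F i <= \sum_j F j.
Proof. by move=> F_ge0; rewrite (bigD1 i) //= lerDl sumr_ge0. Qed.

Lemma ord_sum_eq1_gt0 (R : numDomainType) n (F : 'I_n -> R) :
  \sum_i F i = 1 -> (0 < n)%N.
Proof. by case: n F => // F; rewrite big_ord0 => /eqP; rewrite eq_sym oner_eq0. Qed.

Section InnerProduct.
Variables (R : realType) (M : nat).
Implicit Types (u v w : 'rV[R]_M) (a t : R).

Lemma dotE u v : dot u v = \sum_j u 0 j * v 0 j.
Proof. by rewrite /dot !mxE; apply: eq_bigr => j _; rewrite mxE. Qed.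

Lemma dotC u v : dot u v = dot v u.
Proof. by rewrite !dotE; apply: eq_bigr => j _; rewrite mulrC. Qed.

Lemma dotDl u v w : dot (u + v) w = dot u w + dot v w.
Proof. by rewrite !dotE -big_split; apply: eq_bigr => j _; rewrite !mxE mulrDl. Qed.

Lemma dotZl a u v : dot (a *: u) v = a * dot u v.
Proof. by rewrite !dotE mulr_sumr; apply: eq_bigr => j _; rewrite !mxE mulrA. Qed.

Lemma dotNl u v : dot (- u) v = - dot u v.
Proof. by rewrite -scaleN1r dotZl mulN1r. Qed.

Lemma dotBl u v w : dot (u - v) w = dot u w - dot v w.
Proof. by rewrite dotDl dotNl. Qed.

Lemma dotDr u v w : dot w (u + v) = dot w u + dot w v.
Proof. by rewrite dotC dotDl !(dotC w). Qed.

Lemma dotZr a u v : dot u (a *: v) = a * dot u v.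
Proof. by rewrite dotC dotZl dotC. Qed.

Lemma dotNr u v : dot u (- v) = - dot u v.
Proof. by rewrite dotC dotNl dotC. Qed.

Lemma dotBr u v w : dot w (u - v) = dot w u - dot w v.
Proof. by rewrite dotDr dotNr. Qed.

Lemma dot_suml (I : Type) (r : seq I) (P : pred I) (f : I -> 'rV[R]_M) v :
  dot (\sum_(i <- r | P i) f i) v = \sum_(i <- r | P i) dot (f i) v.
Proof.
elim/big_rec2: _ => [|i x y _ <-]; last by rewrite dotDl.
by rewrite -(scale0r 0) dotZl mul0r.
Qed.

Lemma dot_sumr (I : Type) (r : seq I) (P : pred I) (f : I -> 'rV[R]_M) v :
  dot v (\sum_(i <- r | P i) f i) = \sum_(i <- r | P i) dot v (f i).
Proof. by rewrite dotC dot_suml; apply: eq_bigr => i _; rewrite dotC. Qed.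

Lemma norm20 : norm2 (0 : 'rV[R]_M) = 0.
Proof. by rewrite /norm2 -(scale0r 0) dotZl mul0r. Qed.

Lemma norm2_ge0 v : 0 <= norm2 v.
Proof. by rewrite /norm2 dotE sumr_ge0 // => j _; rewrite -expr2 sqr_ge0. Qed.

Lemma norm2D u v : norm2 (u + v) = norm2 u + 2 * dot u v + norm2 v.
Proof. rewrite /norm2 !dotDl !dotDr (dotC v u); ring. Qed.

Lemma norm2B u v : norm2 (u - v) = norm2 u - 2 * dot u v + norm2 v.
Proof. rewrite /norm2 !dotBl !dotBr (dotC v u); ring. Qed.

Lemma norm2Z a v : norm2 (a *: v) = a ^+ 2 * norm2 v.
Proof. by rewrite /norm2 dotZl dotZr mulrA expr2. Qed.

Lemma norm2BC u v : norm2 (u - v) = norm2 (v - u).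
Proof. by rewrite -opprB /norm2 dotNl dotNr opprK. Qed.

Lemma ler_dot_young t u v : 0 < t -> 2 * dot u v <= t * norm2 u + t^-1 * norm2 v.
Proof.
move=> t_gt0; have := norm2_ge0 (t *: u - v).
rewrite norm2B norm2Z dotZl => sq_ge0.
have := mulr_ge0 (ltW (_ : 0 < t^-1)) sq_ge0; rewrite invr_gt0 => /(_ t_gt0).
have -> : t^-1 * (t ^+ 2 * norm2 u - 2 * (t * dot u v) + norm2 v) =
  t * norm2 u - 2 * dot u v + t^-1 * norm2 v by field; rewrite gt_eqF.
lra.
Qed.

Lemma ler_norm2D u v : norm2 (u + v) <= 2 * norm2 u + 2 * norm2 v.
Proof. have := ler_dot_young u v ltr01; rewrite invr1 norm2D; lra. Qed.

Lemma ler_norm2_sum (I : finType) (A : {pred I}) (f : I -> 'rV[R]_M) :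
  norm2 (\sum_(i in A) f i) <= #|A|%:R * \sum_(i in A) norm2 (f i).
Proof.
rewrite {1}/norm2 dot_suml; under eq_bigr => i _ do rewrite dot_sumr.
rewrite -(ler_pM2l (ltr0Sn _ 1)) mulr_sumr.
apply: le_trans (_ : \sum_(i in A) \sum_(j in A) (norm2 (f i) + norm2 (f j)) <= _).
  apply: ler_sum => i _; rewrite mulr_sumr; apply: ler_sum => j _.
  by have := ler_dot_young (f i) (f j) ltr01; rewrite invr1 !mul1r.
under eq_bigr do rewrite big_split /= sumr_const -mulr_natl.
by rewrite big_split /= sumr_const -mulr_sumr mulr_natl mulr2n mulrDl mul1r.
Qed.

Lemma scalerS_subD n (w u s : 'rV[R]_M) :
  n.+1%:R *: w - (u + s) = (w - u) + (n%:R *: w - s).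
Proof. by rewrite -natr1 scalerDl scale1r [_ *: w + w]addrC opprD addrACA. Qed.

End InnerProduct.

Section FiniteDistributions.
Variables (R : realType) (M : nat).
Implicit Types (d : fdist R M) (f g : 'rV[R]_M -> R) (w : 'rV[R]_M).

Definition is_prob d := (forall x, x \in d -> 0 <= x.1) /\ fexp d (fun=> 1) = 1.

Lemma fexp_map (T : Type) (s : seq T) (a : T -> R) (h : T -> 'rV[R]_M) f :
  fexp [seq (a x, h x) | x <- s] f = \sum_(x <- s) a x * f (h x).
Proof. by rewrite /fexp big_map. Qed.

Lemma fexp_dirac w f : fexp [:: (1, w)] f = f w.
Proof. by rewrite /fexp big_seq1 mul1r. Qed.

Lemma fexp_bind d (h : 'rV[R]_M -> fdist R M) f :
  fexp (fbind d h) f = fexp d (fun v => fexp (h v) f).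
Proof.
rewrite /fexp /fbind big_flatten /= big_map; apply: eq_bigr => x _.
by rewrite big_map mulr_sumr; apply: eq_bigr => y _; rewrite mulrA.
Qed.

Lemma eq_fexp d f g : f =1 g -> fexp d f = fexp d g.
Proof. by move=> fg; apply: eq_bigr => x _; rewrite fg. Qed.

Lemma fexpD d f g : fexp d (fun v => f v + g v) = fexp d f + fexp d g.
Proof. by rewrite /fexp -big_split; apply: eq_bigr => x _; rewrite mulrDr. Qed.

Lemma fexpZ d c f : fexp d (fun v => c * f v) = c * fexp d f.
Proof. by rewrite /fexp mulr_sumr; apply: eq_bigr => x _; rewrite mulrCA. Qed.

Lemma fexpB d f g : fexp d (fun v => f v - g v) = fexp d f - fexp d g.
Proof.
rewrite (eq_fexp _ (g := fun v => f v + -1 * g v)) => [|v]; last by rewrite mulN1r.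
by rewrite fexpD fexpZ mulN1r.
Qed.

Lemma fexp_cst d c : is_prob d -> fexp d (fun=> c) = c.
Proof. by case=> _ d1; rewrite -[RHS]mulr1 -d1 -fexpZ; apply: eq_fexp => v; rewrite mulr1. Qed.

Lemma ler_fexp d f g : is_prob d -> (forall v, f v <= g v) -> fexp d f <= fexp d g.
Proof.
case=> d_ge0 _ fg; rewrite /fexp big_seq [X in _ <= X]big_seq.
by apply: ler_sum => x xd; apply: ler_wpM2l; [exact: d_ge0 | exact: fg].
Qed.

Lemma fexp_shift d u f : fexp [seq (x.1, u + x.2) | x <- d] f = fexp d (fun s => f (u + s)).
Proof. by rewrite /fexp big_map. Qed.

Lemma is_prob_shift d u : is_prob d -> is_prob [seq (x.1, u + x.2) | x <- d].
Proof. by case=> d_ge0 d1; split=> [_ /mapP [x xd ->]|]; [exact: d_ge0 xd | rewrite fexp_shift]. Qed.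

Lemma is_prob_dirac w : is_prob [:: (1, w)].
Proof. by split=> [x|]; [rewrite inE => /eqP -> | rewrite fexp_dirac]. Qed.

Lemma is_prob_bind d (h : 'rV[R]_M -> fdist R M) :
  is_prob d -> (forall v, is_prob (h v)) -> is_prob (fbind d h).
Proof.
move=> [d_ge0 d1] hP; split=> [z|].
  case/flattenP=> _ /mapP [x xd ->] /mapP [y yh ->] /=.
  by apply: mulr_ge0; [exact: d_ge0 | case: (hP x.2) => + _; apply].
by rewrite fexp_bind -[RHS]d1; apply: eq_fexp => v; case: (hP v).
Qed.

End FiniteDistributions.

Section SamplingDesign.
Variables (R : realType) (T : finType) (n : nat) (p : T -> R) (pi : {set T} -> R).
Hypothesis design : sampling_design n p pi.

Lemma sum_enum_setT (F : {set T} -> R) : \sum_(A <- enum [set: {set T}]) F A = \sum_A F A.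
Proof. by rewrite big_enum; apply: eq_bigl => A; rewrite !inE. Qed.

Lemma sampling_design_sumZ (V : lmodType R) (F : T -> V) :
  \sum_A pi A *: \sum_(j in A) F j = \sum_j (n%:R * p j) *: F j.
Proof.
case: design => _ _ _ incl.
under eq_bigr => A _ do rewrite scaler_sumr big_mkcond /=.
rewrite exchange_big /=; apply: eq_bigr => j _.
rewrite -incl scaler_suml [RHS]big_mkcond /=; apply: eq_bigr => A _.
by case: (j \in A); rewrite ?scaler0.
Qed.

Lemma sampling_design_sum (F : T -> R) :
  \sum_A pi A * \sum_(j in A) F j = \sum_j n%:R * p j * F j.
Proof. exact: (@sampling_design_sumZ R^o). Qed.

Lemma sampling_design_mean (F : T -> R) : (0 < n)%N ->
  \sum_A pi A * (n%:R^-1 * \sum_(j in A) F j) = \sum_j p j * F j.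
Proof.
move=> n_gt0; under eq_bigr do rewrite mulrCA.
rewrite -mulr_sumr sampling_design_sum mulr_sumr; apply: eq_bigr => j _.
by rewrite !mulrA mulVf ?mul1r // pnatr_eq0 -lt0n.
Qed.

Lemma ler_sampling_design (G H : {set T} -> R) :
  (forall A : {set T}, #|A| = n -> G A <= H A) -> \sum_A pi A * G A <= \sum_A pi A * H A.
Proof.
case: design => pi_ge0 _ card _ GH; apply: ler_sum => A _.
have [->|/card/GH] := eqVneq (pi A) 0; first by rewrite !mul0r.
exact: ler_wpM2l.
Qed.

Lemma is_prob_sampling_design M (h : {set T} -> 'rV[R]_M) :
  is_prob [seq (pi A, h A) | A <- enum [set: {set T}]].
Proof.
case: design => pi_ge0 pi1 _ _; split=> [x /mapP [A _ ->] /=|]; first exact: pi_ge0.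
by rewrite fexp_map sum_enum_setT; under eq_bigr do rewrite mulr1.
Qed.

End SamplingDesign.

Section FirstOrderConditions.
Local Open Scope classical_set_scope.
Variables (R : realType) (M : nat).
Implicit Types (f : 'rV[R]_M -> R) (g : 'rV[R]_M -> 'rV[R]_M) (u v w d : 'rV[R]_M).

Lemma has_gradient_is_derive f g w d : has_gradient f g -> is_derive w d f (dot (g w) d).
Proof. by move=> /(_ w) [df dfE]; split; [exact: diff_derivable | rewrite deriveE]. Qed.

Lemma is_derive_cvg_right f w d l : is_derive w d f l ->
  (fun t : R => t^-1 * (f (t *: d + w) - f w)) @ 0^'+ --> l.
Proof. by case=> /cvgP df <-; exact: cvg_dnbhs_at_right. Qed.

Lemma strongly_convex_is_derive nu f u v l :
  strongly_convex nu f -> is_derive v (u - v) f l ->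
  f v + l + nu / 2 * norm2 (u - v) <= f u.
Proof.
move=> scf /is_derive_cvg_right dq.
set c := nu / 2 * norm2 (u - v).
have bound : (fun t : R => f u - f v - c + t * c) @ 0^'+ --> f u - f v - c.
  apply: cvg_at_right_filter.
  have := cvgD (cvg_cst (f u - f v - c)) (cvgM (@cvg_id _ (nbhs (0 : R))) (cvg_cst c)).
  by rewrite mul0r addr0; apply.
suff : l <= f u - f v - c by rewrite /c; lra.
apply: (ler_cvg_to dq bound); near=> t.
have t_gt0 : 0 < t by near: t; exact: nbhs_right_gt.
have t_le1 : t <= 1 by near: t; exact: nbhs_right_le.
have := scf u v t; rewrite ltW //= t_le1 => /(_ isT).
have -> : t *: u + (1 - t) *: v = t *: (u - v) + v.
  by rewrite scalerBl scale1r scalerBr addrCA addrC.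
move=> ineq; rewrite ler_pdivrMl //.
suff : t * (1 - t) * c = nu / 2 * t * (1 - t) * norm2 (u - v) by nra.
by rewrite /c; ring.
Unshelve. all: by end_near.
Qed.

Lemma is_minimizer_is_derive f w d l : is_minimizer f w -> is_derive w d f l -> 0 <= l.
Proof.
move=> wmin /is_derive_cvg_right dq.
apply: (ler_cvg_to (cvg_cst 0) dq); near=> t.
have t_gt0 : 0 < t by near: t; exact: nbhs_right_gt.
by apply: mulr_ge0; [rewrite invr_ge0 ltW | rewrite subr_ge0].
Unshelve. all: by end_near.
Qed.

End FirstOrderConditions.

Section EmpiricalRisk.
Variables (R : realType) (M K : nat) (N : 'I_K -> nat).
(* Otherwise the agent index of the dependently typed variables becomes implicit. *)
Local Unset Implicit Arguments.
Variables (Q : forall k : 'I_K, 'I_(N k) -> 'rV[R]_M -> R)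
  (gQ : forall k : 'I_K, 'I_(N k) -> 'rV[R]_M -> 'rV[R]_M).
Local Set Implicit Arguments.
Hypothesis gradQ : forall k n, has_gradient (Q k n) (gQ k n).

Lemma is_derive_emp_risk k w d : is_derive w d (emp_risk Q k) (dot (grad_risk gQ k w) d).
Proof.
have -> : emp_risk Q k = (N k)%:R^-1 \*: \sum_n Q k n.
  by apply/funext => v; rewrite /emp_risk /= fct_sumE.
rewrite /grad_risk dotZl dot_suml.
by apply: is_deriveZ; apply: is_derive_sum => n; exact: has_gradient_is_derive.
Qed.

Lemma grad_risk_strongly_monotone nu k u v : strongly_convex nu (emp_risk Q k) ->
  nu * norm2 (u - v) <= dot (grad_risk gQ k u - grad_risk gQ k v) (u - v).
Proof.
move=> scP.
have := strongly_convex_is_derive scP (is_derive_emp_risk k v (u - v)).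
have := strongly_convex_is_derive scP (is_derive_emp_risk k u (v - u)).
rewrite (norm2BC v u) -opprB dotNr dotBl; lra.
Qed.

Lemma sum_grad_risk_minimizer wo : (0 < K)%N ->
  is_minimizer (fun w => K%:R^-1 * \sum_(k < K) emp_risk Q k w) wo ->
  forall d, \sum_k dot (grad_risk gQ k wo) d = 0.
Proof.
move=> K_gt0 wo_min.
have ge0 d : 0 <= \sum_k dot (grad_risk gQ k wo) d.
  rewrite -(pmulr_rge0 _ (_ : 0 < K%:R^-1)) ?invr_gt0 ?ltr0n //.
  apply: (is_minimizer_is_derive wo_min).
  have -> : (fun w => K%:R^-1 * \sum_(k < K) emp_risk Q k w) =
    K%:R^-1 \*: \sum_k emp_risk Q k by apply/funext => v; rewrite /= fct_sumE.
  by apply: is_deriveZ; apply: is_derive_sum => k; exact: is_derive_emp_risk.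
move=> d; apply/eqP; rewrite eq_le ge0 andbT -oppr_ge0 -sumrN.
by under eq_bigr do rewrite -dotNr; exact: ge0.
Qed.

End EmpiricalRisk.

Section Convergence.
Variables (R : realType) (M K : nat) (N : 'I_K -> nat).
Local Unset Implicit Arguments.
Variables (gQ : forall k : 'I_K, 'I_(N k) -> 'rV[R]_M -> 'rV[R]_M)
  (p : 'I_K -> R) (pn : forall k : 'I_K, 'I_(N k) -> R) (E B : 'I_K -> nat)
  (piB : forall k : 'I_K, {set 'I_(N k)} -> R) (L : nat) (piL : {set 'I_K} -> R).
Variables (delta nu : R) (wo : 'rV[R]_M).
Hypotheses (K_gt0 : (0 < K)%N) (E_gt0 : forall k, (0 < E k)%N)
  (B_gt0 : forall k, (0 < B k)%N) (N_gt0 : forall k, (0 < N k)%N)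
  (p_gt0 : forall k, 0 < p k) (pn_gt0 : forall k n, 0 < pn k n)
  (designB : forall k, sampling_design (B k) (pn k) (piB k))
  (lipQ : forall k n, lipschitz_grad delta (gQ k n))
  (L_gt0 : (0 < L)%N) (designL : sampling_design L p piL) (p_sum1 : \sum_k p k = 1)
  (nu_gt0 : 0 < nu)
  (grad_risk_monotone : forall k u v,
    nu * norm2 (u - v) <= dot (grad_risk gQ k u - grad_risk gQ k v) (u - v))
  (sum_grad_risk_wo : forall d, \sum_k dot (grad_risk gQ k wo) d = 0).
Local Set Implicit Arguments.

Local Notation update mu A v := (local_update gQ p pn E B mu A v).
Local Notation run mu k e w := (local_run gQ p pn E B mu piB k e w).

Definition local_rate mu k := mu / (K%:R * p k * (E k)%:R).

Definition grad_moment_weight k := \sum_(b < N k) ((N k)%:R ^+ 2 * pn k b)^-1.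

Definition grad_moment k v := \sum_(b < N k) ((N k)%:R ^+ 2 * pn k b)^-1 * norm2 (gQ k b v).

Lemma local_rateE mu k : local_rate mu k = mu * local_rate 1 k.
Proof. by rewrite /local_rate mul1r. Qed.

Lemma local_rate1_gt0 k : 0 < local_rate 1 k.
Proof. by rewrite /local_rate mul1r invr_gt0 !mulr_gt0 ?ltr0n. Qed.

Lemma moment_coef_gt0 k b : 0 < ((N k)%:R ^+ 2 * pn k b)^-1.
Proof. by rewrite invr_gt0 mulr_gt0 ?exprn_gt0 ?ltr0n. Qed.

Lemma grad_moment_weight_ge0 k : 0 <= grad_moment_weight k.
Proof. by apply: sumr_ge0 => b _; rewrite ltW ?moment_coef_gt0. Qed.

Lemma grad_moment_ge0 k v : 0 <= grad_moment k v.
Proof. by apply: sumr_ge0 => b _; rewrite mulr_ge0 ?norm2_ge0 ?ltW ?moment_coef_gt0. Qed.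

Lemma local_run_succ mu k e w f :
  fexp (run mu k e.+1 w) f = fexp (run mu k e w) (fun v => \sum_A piB k A * f (update mu A v)).
Proof. by rewrite /= fexp_bind; apply: eq_fexp => v; rewrite fexp_map sum_enum_setT. Qed.

Lemma is_prob_local_run mu k e w : is_prob (run mu k e w).
Proof.
elim: e => [|e IH] /=; first exact: is_prob_dirac.
by apply: is_prob_bind => // v; exact: (is_prob_sampling_design (designB k) (fun A => update mu A v)).
Qed.

Lemma local_update_mean mu k v :
  \sum_A piB k A *: (v - update mu A v) = local_rate mu k *: grad_risk gQ k v.
Proof.
under eq_bigr do rewrite opprB addrC subrK scalerA mulrC -scalerA.
rewrite -scaler_sumr (sampling_design_sumZ (designB k)) /grad_risk scalerA scaler_sumr scaler_sumr.
apply: eq_bigr => b _; rewrite !scalerA; congr (_ *: _).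
have := gt_eqF (pn_gt0 k b); rewrite /local_rate => pn_neq0; field.
by rewrite !pnatr_eq0 -!lt0n E_gt0 B_gt0 N_gt0 K_gt0 pn_neq0 gt_eqF.
Qed.

Lemma local_update_sq_mean mu k v :
  \sum_A piB k A * norm2 (v - update mu A v) <= local_rate mu k ^+ 2 * grad_moment k v.
Proof.
pose c b := ((N k)%:R * pn k b)^-1.
set a := mu / (K%:R * p k * (E k)%:R * (B k)%:R).
under eq_bigr do rewrite opprB addrC subrK norm2Z.
apply: le_trans (_ : \sum_A piB k A * (a ^+ 2 * ((B k)%:R *
    \sum_(b in A) norm2 (c b *: gQ k b v))) <= _).
  apply: (ler_sampling_design (designB k)) => A cardA.
  by apply: ler_wpM2l; [exact: sqr_ge0 | rewrite -cardA; exact: ler_norm2_sum].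
under eq_bigr => A _ do rewrite mulrCA [piB k A * _]mulrCA mulrA.
rewrite -mulr_sumr (sampling_design_sum (designB k)) /grad_moment !mulr_sumr.
rewrite le_eqVlt; apply/orP; left; apply/eqP/eq_bigr => b _; rewrite norm2Z /c /a /local_rate.
have := gt_eqF (pn_gt0 k b) => pn_neq0; field.
by rewrite !pnatr_eq0 -!lt0n E_gt0 B_gt0 N_gt0 K_gt0 pn_neq0 gt_eqF.
Qed.

Lemma lipschitz_grad_risk k : lipschitz_grad delta (grad_risk gQ k).
Proof.
move=> u v; rewrite /grad_risk -scalerBr -sumrB norm2Z.
have := ler_norm2_sum predT (fun b => gQ k b u - gQ k b v).
rewrite cardT size_enum_ord (eq_bigl xpredT) // [X in _ * X](eq_bigl xpredT) // => sum_le.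
have sum_lip : \sum_b norm2 (gQ k b u - gQ k b v) <= \sum_(b < N k) delta ^+ 2 * norm2 (u - v).
  by apply: ler_sum => b _; exact: lipQ.
rewrite sumr_const card_ord -mulr_natl in sum_lip.
apply: le_trans (ler_wpM2l (sqr_ge0 _) (le_trans sum_le (ler_wpM2l (ler0n _ _) sum_lip))) _.
have N_neq0 : (N k)%:R != 0 :> R by rewrite pnatr_eq0 -lt0n.
by rewrite [X in _ * X]mulrA -expr2 mulrA -exprMn mulVf // expr1n mul1r.
Qed.

Lemma grad_moment_le k v :
  grad_moment k v <= 2 * grad_moment k wo + 2 * delta ^+ 2 * grad_moment_weight k * norm2 (v - wo).
Proof.
rewrite /grad_moment /grad_moment_weight !mulr_sumr mulr_suml -big_split /=.
apply: ler_sum => b _.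
have := ler_norm2D (gQ k b wo) (gQ k b v - gQ k b wo); rewrite [_ + (_ - _)]addrC subrK.
have := lipQ k b v wo => lip_b sq_le.
have : norm2 (gQ k b v) <= 2 * norm2 (gQ k b wo) + 2 * (delta ^+ 2 * norm2 (v - wo)) by lra.
move/(ler_wpM2l (ltW (moment_coef_gt0 b))); lra.
Qed.

Lemma local_update_dot_mean mu k x v :
  \sum_A piB k A * dot x (v - update mu A v) = local_rate mu k * dot x (grad_risk gQ k v).
Proof.
by rewrite -dotZr -local_update_mean dot_sumr; apply: eq_bigr => A _; rewrite dotZr.
Qed.

Lemma local_step_sq_dev k : exists2 a, 0 <= a & exists2 b, 0 <= b &
  forall mu v w, 0 < mu <= 1 ->
  \sum_A piB k A * norm2 (w - update mu A v)
    <= a * norm2 (w - v) + b * mu ^+ 2 * (grad_moment k wo + norm2 (w - wo)).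
Proof.
set c := local_rate 1 k ^+ 2; set D := delta ^+ 2 * grad_moment_weight k.
have c_ge0 : 0 <= c by exact: sqr_ge0.
have D_ge0 : 0 <= D by rewrite mulr_ge0 ?sqr_ge0 ?grad_moment_weight_ge0.
have cD_ge0 := mulr_ge0 c_ge0 D_ge0.
exists (2 + 8 * c * D); first lra.
exists (c * (4 + 8 * D)) => [|mu v w /andP [mu_gt0 mu_le1]]; first lra.
have split_sq : \sum_A piB k A * norm2 (w - update mu A v)
    <= 2 * norm2 (w - v) + 2 * (mu ^+ 2 * c) * grad_moment k v.
  apply: le_trans (_ : \sum_A piB k A * (2 * norm2 (w - v) + 2 * norm2 (v - update mu A v)) <= _).
    apply: (ler_sampling_design (designB k)) => A _.
    by rewrite -[w - _](subrKA v); exact: ler_norm2D.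
  under eq_bigr do rewrite mulrDr [_ * (2 * norm2 (_ - update _ _ _))]mulrCA.
  rewrite big_split /= -mulr_suml -mulr_sumr.
  case: (designB k) => _ -> _ _; rewrite mul1r lerD2l -mulrA ler_pM2l // /c -exprMn -local_rateE.
  exact: local_update_sq_mean.
have moment_v : grad_moment k v <= 2 * grad_moment k wo + 2 * D * norm2 (v - wo).
  by rewrite /D mulrA; exact: grad_moment_le.
have dist_v : norm2 (v - wo) <= 2 * norm2 (w - v) + 2 * norm2 (w - wo).
  by rewrite -[v - wo](subrKA w) norm2BC; exact: ler_norm2D.
have m_ge0 : 0 <= mu ^+ 2 * c by rewrite mulr_ge0 ?sqr_ge0.
have m_le : mu ^+ 2 * c <= c by rewrite -[leRHS]mul1r ler_wpM2r // expr_le1 // ltW.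
have mD_ge0 := mulr_ge0 m_ge0 D_ge0.
have := ler_wpM2l m_ge0 moment_v; have := ler_wpM2l mD_ge0 dist_v.
have := ler_wpM2r (mulr_ge0 D_ge0 (norm2_ge0 (w - v))) m_le.
have := mulr_ge0 mD_ge0 (grad_moment_ge0 k wo); have := mulr_ge0 m_ge0 (norm2_ge0 (w - wo)).
lra.
Qed.

Lemma local_run_sq_dev k e : exists2 C, 0 <= C & forall mu w, 0 < mu <= 1 ->
  fexp (run mu k e w) (fun v => norm2 (w - v))
    <= C * mu ^+ 2 * (grad_moment k wo + norm2 (w - wo)).
Proof.
have [a a_ge0 [b b_ge0 step]] := local_step_sq_dev k.
elim: e => [|e [C C_ge0 IH]].
  by exists 0 => // mu w _; rewrite fexp_dirac subrr norm20 !mul0r.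
exists (a * C + b) => [|mu w mu01]; first by rewrite addr_ge0 ?mulr_ge0.
rewrite local_run_succ.
apply: le_trans (ler_fexp (is_prob_local_run _ _ _ _) (fun v => step mu v w mu01)) _.
rewrite fexpD fexpZ (fexp_cst _ (is_prob_local_run _ _ _ _)).
have := ler_wpM2l a_ge0 (IH mu w mu01); lra.
Qed.

Lemma local_step_drift k t mu v w x : 0 < t -> 0 <= mu ->
  dot x (w - v) + local_rate mu k * (dot x (grad_risk gQ k w) - t * norm2 x)
    - local_rate mu k * t^-1 * delta ^+ 2 * norm2 (w - v)
  <= \sum_A piB k A * dot x (w - update mu A v).
Proof.
move=> t_gt0 mu_ge0.
have -> : \sum_A piB k A * dot x (w - update mu A v) =
    dot x (w - v) + local_rate mu k * dot x (grad_risk gQ k v).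
  rewrite -local_update_dot_mean -[dot x (w - v)]mul1r.
  case: (designB k) => _ <- _ _; rewrite mulr_suml -big_split /=.
  by apply: eq_bigr => A _; rewrite -mulrDr -dotDr addrA subrK.
have r_ge0 : 0 <= local_rate mu k.
  by rewrite local_rateE; exact: mulr_ge0 mu_ge0 (ltW (local_rate1_gt0 k)).
suff grad_v : dot x (grad_risk gQ k w) - t * norm2 x - t^-1 * delta ^+ 2 * norm2 (w - v)
    <= dot x (grad_risk gQ k v) by have := ler_wpM2l r_ge0 grad_v; lra.
have t_inv_ge0 : 0 <= t^-1 by rewrite invr_ge0 ltW.
have := ler_dot_young x (grad_risk gQ k w - grad_risk gQ k v) t_gt0.
have := ler_wpM2l t_inv_ge0 (lipschitz_grad_risk k w v).
have := mulr_ge0 (ltW t_gt0) (norm2_ge0 x).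
have := mulr_ge0 t_inv_ge0 (norm2_ge0 (grad_risk gQ k w - grad_risk gQ k v)).
rewrite dotBr; lra.
Qed.

Lemma local_run_drift k t e : 0 < t -> exists2 C, 0 <= C & forall mu w, 0 < mu <= 1 ->
  e%:R * local_rate mu k * (dot (w - wo) (grad_risk gQ k w) - t * norm2 (w - wo))
    - C * mu ^+ 2 * (grad_moment k wo + norm2 (w - wo))
  <= fexp (run mu k e w) (fun v => dot (w - wo) (w - v)).
Proof.
move=> t_gt0; elim: e => [|e [C C_ge0 IH]].
  by exists 0 => // mu w _; rewrite fexp_dirac dotBr !subrr !mul0r subrr.
have [Cq Cq_ge0 sq_dev] := local_run_sq_dev k e.
set c := local_rate 1 k; have c_gt0 : 0 < c := local_rate1_gt0 k.
have t_inv_ge0 : 0 <= t^-1 by rewrite invr_ge0 ltW.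
exists (C + c * t^-1 * delta ^+ 2 * Cq) => [|mu w mu01].
  exact: addr_ge0 C_ge0 (mulr_ge0 (mulr_ge0 (mulr_ge0 (ltW c_gt0) t_inv_ge0) (sqr_ge0 _)) Cq_ge0).
have /andP [mu_gt0 mu_le1] := mu01.
set x := w - wo; set Z := grad_moment k wo + norm2 x.
have Z_ge0 : 0 <= Z by rewrite addr_ge0 ?grad_moment_ge0 ?norm2_ge0.
rewrite local_run_succ.
apply: le_trans (ler_fexp (is_prob_local_run _ _ _ _)
  (fun v => local_step_drift k v w x t_gt0 (ltW mu_gt0))).
rewrite fexpB fexpD (fexp_cst _ (is_prob_local_run _ _ _ _)).
rewrite (fexpZ _ _ (fun v => norm2 (w - v))).
have r_ge0 : 0 <= local_rate mu k by rewrite local_rateE mulr_ge0 // ltW.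
have r_le : local_rate mu k <= c by rewrite local_rateE ler_piMl // ltW.
have := ler_wpM2l (mulr_ge0 (mulr_ge0 r_ge0 t_inv_ge0) (sqr_ge0 delta)) (sq_dev mu w mu01).
have := ler_wpM2r (mulr_ge0 (mulr_ge0 (mulr_ge0 t_inv_ge0 (sqr_ge0 delta)) Cq_ge0)
  (mulr_ge0 (sqr_ge0 mu) Z_ge0)) r_le.
have := IH mu w mu01; rewrite -/x -/Z -natr1; lra.
Qed.

Local Notation slocal mu ks w := (sum_local gQ p pn E B mu piB ks w).

Lemma is_prob_sum_local mu ks w : is_prob (slocal mu ks w).
Proof.
elim: ks => [|k ks IH] /=; first exact: is_prob_dirac.
by apply: is_prob_bind => [|u]; [exact: is_prob_local_run | exact: is_prob_shift].
Qed.

Lemma sum_local_dot mu ks w x :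
  fexp (slocal mu ks w) (fun s => dot x ((size ks)%:R *: w - s))
  = \sum_(k <- ks) fexp (run mu k (E k) w) (fun u => dot x (w - u)).
Proof.
elim: ks => [|k ks IH] /=.
  by rewrite fexp_dirac big_nil scale0r subrr -(scale0r 0) dotZr mul0r.
rewrite fexp_bind big_cons -IH.
rewrite -[X in _ = _ + X](fexp_cst _ (is_prob_local_run mu k (E k) w)) -fexpD.
apply: eq_fexp => u.
rewrite fexp_shift -[dot x (w - u)](fexp_cst _ (is_prob_sum_local mu ks w)) -fexpD.
apply: eq_fexp => s; rewrite -dotDr; congr (dot x _).
exact: scalerS_subD.
Qed.

Lemma sum_local_sq mu ks w :
  fexp (slocal mu ks w) (fun s => norm2 ((size ks)%:R *: w - s))
  <= (size ks)%:R * \sum_(k <- ks) fexp (run mu k (E k) w) (fun u => norm2 (w - u)).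
Proof.
elim: ks => [|k ks IH] /=.
  by rewrite fexp_dirac big_nil scale0r subrr norm20 mul0r.
rewrite fexp_bind big_cons.
(* Young's inequality below is weighted by [size ks], which must be positive. *)
case: ks IH => [|k' ks'] IH.
  rewrite big_nil addr0 mul1r; apply: ler_fexp; first exact: is_prob_local_run.
  by move=> u; rewrite fexp_shift fexp_dirac scale1r addr0.
set n := size (k' :: ks'); set Q := \sum_(j <- k' :: ks') _.
have n_gt0 : 0 < n%:R :> R by rewrite ltr0n.
have young_u u : fexp [seq (x.1, u + x.2) | x <- slocal mu (k' :: ks') w]
    (fun s => norm2 (n.+1%:R *: w - s)) <= (1 + n%:R) * norm2 (w - u) + (1 + n%:R^-1) * (n%:R * Q).
  rewrite fexp_shift.
  apply: le_trans (ler_fexp (is_prob_sum_local _ _ _) (g := fun s =>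
    (1 + n%:R) * norm2 (w - u) + (1 + n%:R^-1) * norm2 (n%:R *: w - s)) _) _.
    move=> s; rewrite scalerS_subD norm2D.
    have := ler_dot_young (w - u) (n%:R *: w - s) n_gt0; lra.
  rewrite fexpD (fexpZ _ _ (fun s => norm2 (n%:R *: w - s))).
  rewrite (fexp_cst _ (is_prob_sum_local _ _ _)) lerD2l.
  apply: ler_wpM2l IH; have : 0 <= n%:R^-1 :> R by rewrite invr_ge0 ltW.
  lra.
apply: le_trans (ler_fexp (is_prob_local_run _ _ _ _) young_u) _.
rewrite fexpD fexpZ (fexp_cst _ (is_prob_local_run _ _ _ _)) -natr1.
have -> : (1 + n%:R^-1) * (n%:R * Q) = (1 + n%:R) * Q by field; rewrite gt_eqF.
by rewrite -mulrDr addrC.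
Qed.

Local Notation fstep mu w := (fed_step gQ p pn E B L mu piL piB w).
Local Notation iterate mu i w0 := (isfedavg gQ p pn E B L mu piL piB i w0).

Lemma fed_step_fexp mu w f : fexp (fstep mu w) f =
  \sum_A piL A * fexp (slocal mu (enum A) w) (fun s => f (L%:R^-1 *: s)).
Proof.
rewrite /fed_step /fexp big_flatten /= big_map sum_enum_setT; apply: eq_bigr => A _.
by rewrite big_map mulr_sumr; apply: eq_bigr => x _; rewrite mulrA.
Qed.

Lemma is_prob_fed_step mu w : is_prob (fstep mu w).
Proof.
case: designL => piL_ge0 piL1 _ _; split.
  move=> z /flattenP [_ /mapP [A _ ->]] /mapP [x xs ->] /=.
  by apply: mulr_ge0 => //; case: (is_prob_sum_local mu (enum A) w) => + _; apply.
rewrite fed_step_fexp -[RHS]piL1; apply: eq_bigr => A _.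
by rewrite (fexp_cst _ (is_prob_sum_local _ _ _)) mulr1.
Qed.

Lemma is_prob_isfedavg mu i w0 : is_prob (iterate mu i w0).
Proof.
elim: i => [|i IH] /=; first exact: is_prob_dirac.
by apply: is_prob_bind IH _ => w; exact: is_prob_fed_step.
Qed.

Lemma fed_step_sq_err mu w :
  fexp (fstep mu w) (fun v => norm2 (wo - v))
  <= norm2 (w - wo) - 2 * \sum_k p k * fexp (run mu k (E k) w) (fun u => dot (w - wo) (w - u))
     + \sum_k p k * fexp (run mu k (E k) w) (fun u => norm2 (w - u)).
Proof.
set x := w - wo.
pose lin k := fexp (run mu k (E k) w) (fun u => dot x (w - u)).
pose sq k := fexp (run mu k (E k) w) (fun u => norm2 (w - u)).
have L_neq0 : L%:R != 0 :> R by rewrite pnatr_eq0 -lt0n.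
have per_sample (A : {set 'I_K}) : #|A| = L ->
    fexp (slocal mu (enum A) w) (fun s => norm2 (wo - L%:R^-1 *: s))
    <= norm2 x - 2 * (L%:R^-1 * \sum_(k in A) lin k) + L%:R^-1 * \sum_(k in A) sq k.
  move=> cardA; have size_A : size (enum A) = L by rewrite -cardA cardE.
  have expand s : norm2 (wo - L%:R^-1 *: s) = L%:R^-1 ^+ 2 * norm2 (L%:R *: w - s)
      - 2 * (L%:R^-1 * dot x (L%:R *: w - s)) + norm2 x.
    have -> : wo - L%:R^-1 *: s = L%:R^-1 *: (L%:R *: w - s) - x.
      by rewrite scalerBr scalerA mulVf // scale1r opprB [RHS]addrC addrA subrK.
    by rewrite norm2B norm2Z dotZl dotC.
  rewrite (eq_fexp _ expand) fexpD fexpB !fexpZ (fexp_cst _ (is_prob_sum_local _ _ _)).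
  have := sum_local_dot mu (enum A) w x; have := sum_local_sq mu (enum A) w.
  rewrite size_A !big_enum /lin /sq => sq_le ->.
  suff : L%:R^-1 ^+ 2 * fexp (slocal mu (enum A) w) (fun s => norm2 (L%:R *: w - s))
      <= L%:R^-1 * \sum_(k in A) fexp (run mu k (E k) w) (fun u => norm2 (w - u)) by lra.
  by rewrite expr2 -mulrA ler_pM2l ?invr_gt0 ?ltr0n // ler_pdivrMl ?ltr0n.
rewrite fed_step_fexp; apply: le_trans (ler_sampling_design designL per_sample) _.
under eq_bigr do rewrite mulrDr mulrBr mulrCA.
rewrite big_split sumrB /= -mulr_suml -mulr_sumr !(sampling_design_mean designL) //.
by case: designL => _ -> _ _; rewrite mul1r.
Qed.

Lemma p_le1 k : p k <= 1.
Proof. by rewrite -p_sum1 ler_sumr_term // => j; exact: ltW. Qed.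

Lemma local_rate_meanE mu k : p k * (E k)%:R * local_rate mu k = mu / K%:R.
Proof.
rewrite /local_rate; field.
by rewrite !pnatr_eq0 -!lt0n E_gt0 K_gt0 gt_eqF.
Qed.

Lemma weighted_moment_le k C mu w : 0 <= C ->
  p k * (C * mu ^+ 2 * (grad_moment k wo + norm2 (w - wo)))
  <= C * mu ^+ 2 * (\sum_j grad_moment j wo + norm2 (w - wo)).
Proof.
move=> C_ge0; have Cmu_ge0 := mulr_ge0 C_ge0 (sqr_ge0 mu).
have Z_ge0 := addr_ge0 (grad_moment_ge0 k wo) (norm2_ge0 (w - wo)).
apply: le_trans (ler_wpM2r (mulr_ge0 Cmu_ge0 Z_ge0) (p_le1 k)) _.
rewrite mul1r ler_wpM2l // lerD2r ler_sumr_term // => j.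
exact: grad_moment_ge0.
Qed.

Lemma sum_dot_grad_risk_ge w :
  K%:R * (nu * norm2 (w - wo)) <= \sum_k dot (w - wo) (grad_risk gQ k w).
Proof.
have -> : \sum_k dot (w - wo) (grad_risk gQ k w) =
    \sum_k dot (grad_risk gQ k w - grad_risk gQ k wo) (w - wo).
  under [RHS]eq_bigr do rewrite dotBl.
  by rewrite sumrB sum_grad_risk_wo subr0; apply: eq_bigr => k _; rewrite dotC.
apply: le_trans (_ : \sum_(k < K) nu * norm2 (w - wo) <= _).
  by rewrite sumr_const card_ord mulr_natl.
by apply: ler_sum => k _; exact: grad_risk_monotone.
Qed.

Lemma sum_local_drift_lower : exists2 C, 0 <= C & forall mu w, 0 < mu <= 1 ->
  nu / 2 * mu * norm2 (w - wo) - C * mu ^+ 2 * (\sum_k grad_moment k wo + norm2 (w - wo))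
  <= \sum_k p k * fexp (run mu k (E k) w) (fun u => dot (w - wo) (w - u)).
Proof.
have nu2_gt0 : 0 < nu / 2 by rewrite divr_gt0.
have [C C_ge0 drift] := fin_all_exists2 (fun k => local_run_drift k (E k) nu2_gt0).
exists (\sum_k C k) => [|mu w mu01]; first exact: sumr_ge0.
set x := w - wo; set Y := \sum_k grad_moment k wo + norm2 x.
have per_agent k : mu / K%:R * dot x (grad_risk gQ k w) - mu / K%:R * (nu / 2 * norm2 x)
    - C k * mu ^+ 2 * Y <= p k * fexp (run mu k (E k) w) (fun u => dot x (w - u)).
  have := ler_wpM2l (ltW (p_gt0 k)) (drift k mu w mu01).
  have := weighted_moment_le k mu w (C_ge0 k).
  rewrite -/x -/Y mulrBr [p k * ((E k)%:R * _ * _)]mulrA [p k * ((E k)%:R * _)]mulrA local_rate_meanE.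
  lra.
apply: le_trans (ler_sum _ (fun k _ => per_agent k)).
have K_neq0 : K%:R != 0 :> R by rewrite pnatr_eq0 -lt0n.
have sum_C : \sum_k C k * mu ^+ 2 * Y = (\sum_k C k) * mu ^+ 2 * Y by rewrite !mulr_suml.
rewrite !sumrB sum_C -mulr_sumr sumr_const card_ord -[mu / _ * _ *+ K]mulr_natr.
have mu_gt0 : 0 < mu by case/andP: mu01.
have := ler_wpM2l (ltW (divr_gt0 mu_gt0 (_ : 0 < K%:R))) (sum_dot_grad_risk_ge w).
rewrite ltr0n K_gt0 -/x => /(_ isT).
have -> : mu / K%:R * (K%:R * (nu * norm2 x)) = mu * nu * norm2 x by field.
have -> : mu / K%:R * (nu / 2 * norm2 x) * K%:R = nu / 2 * mu * norm2 x by field.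
lra.
Qed.

Lemma sum_local_sq_dev_upper : exists2 C, 0 <= C & forall mu w, 0 < mu <= 1 ->
  \sum_k p k * fexp (run mu k (E k) w) (fun u => norm2 (w - u))
  <= C * mu ^+ 2 * (\sum_k grad_moment k wo + norm2 (w - wo)).
Proof.
have [C C_ge0 sq_dev] := fin_all_exists2 (fun k => local_run_sq_dev k (E k)).
exists (\sum_k C k) => [|mu w mu01]; first exact: sumr_ge0.
rewrite !mulr_suml; apply: ler_sum => k _.
exact: le_trans (ler_wpM2l (ltW (p_gt0 k)) (sq_dev k mu w mu01)) (weighted_moment_le k mu w (C_ge0 k)).
Qed.

Lemma fed_step_contraction : exists2 C, 0 <= C & forall mu w, 0 < mu <= 1 ->
  fexp (fstep mu w) (fun v => norm2 (wo - v))
  <= (1 - nu * mu + C * mu ^+ 2) * norm2 (w - wo) + C * mu ^+ 2 * \sum_k grad_moment k wo.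
Proof.
have [Cl Cl_ge0 drift] := sum_local_drift_lower.
have [Cq Cq_ge0 sq_dev] := sum_local_sq_dev_upper.
exists (2 * Cl + Cq) => [|mu w mu01]; first lra.
apply: le_trans (fed_step_sq_err mu w) _.
have := drift mu w mu01; have := sq_dev mu w mu01; lra.
Qed.

Local Notation sigma_s2 := (sigma_s2 gQ p pn E B wo).
Local Notation sigma_sk2 k := (sigma_sk2 gQ pn E B k wo).

Lemma sigma_sk2_ge0 k : 0 <= sigma_sk2 k.
Proof.
apply: mulr_ge0; first exact: divr_ge0 (ler0n _ 6) (mulr_ge0 (mulr_ge0 (ler0n _ _) (ler0n _ _)) (sqr_ge0 _)).
by apply: sumr_ge0 => b _; rewrite mulr_ge0 ?norm2_ge0 // invr_ge0 ltW.
Qed.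

Lemma sigma_sk2_le k : sigma_sk2 k <= K%:R ^+ 2 * p k * sigma_s2.
Proof.
pose term j := (p j)^-1 * (sigma_sk2 j
  + (3 + 6 / ((E j)%:R * (B j)%:R)) * norm2 (grad_risk gQ j wo)).
have coef_ge0 j : 0 <= 3 + 6 / ((E j)%:R * (B j)%:R) :> R.
  exact: addr_ge0 (ler0n _ 3) (divr_ge0 (ler0n _ 6) (mulr_ge0 (ler0n _ _) (ler0n _ _))).
have term_ge0 j : 0 <= term j.
  apply: mulr_ge0; first by rewrite invr_ge0 ltW.
  exact: addr_ge0 (sigma_sk2_ge0 j) (mulr_ge0 (coef_ge0 j) (norm2_ge0 _)).
have K_neq0 : K%:R != 0 :> R by rewrite pnatr_eq0 -lt0n.
have -> : K%:R ^+ 2 * p k * sigma_s2 = p k * \sum_j term j.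
  by rewrite /Defs.sigma_s2; field.
apply: le_trans (ler_wpM2l (ltW (p_gt0 k)) (ler_sumr_term k term_ge0)).
rewrite /term mulrA mulfV ?gt_eqF // mul1r lerDl.
exact: mulr_ge0 (coef_ge0 k) (norm2_ge0 _).
Qed.

Lemma grad_moment_le_sigma_s2 k :
  grad_moment k wo <= (E k)%:R * (B k)%:R * K%:R ^+ 2 * p k / 6 * sigma_s2.
Proof.
have -> : grad_moment k wo = (E k)%:R * (B k)%:R / 6 * sigma_sk2 k.
  rewrite /grad_moment /Defs.sigma_sk2 mulrA mulr_sumr; apply: eq_bigr => b _.
  have := gt_eqF (pn_gt0 k b) => pn_neq0; field.
  by rewrite !pnatr_eq0 -!lt0n E_gt0 B_gt0 N_gt0 pn_neq0.
have -> : (E k)%:R * (B k)%:R * K%:R ^+ 2 * p k / 6 * sigma_s2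
    = (E k)%:R * (B k)%:R / 6 * (K%:R ^+ 2 * p k * sigma_s2) by ring.
apply: ler_wpM2l (sigma_sk2_le k).
exact: divr_ge0 (mulr_ge0 (ler0n _ _) (ler0n _ _)) (ler0n _ 6).
Qed.

Lemma sigma_s2_ge0 : 0 <= sigma_s2.
Proof.
have := le_trans (sigma_sk2_ge0 (Ordinal K_gt0)) (sigma_sk2_le (Ordinal K_gt0)).
by rewrite pmulr_rge0 // mulr_gt0 ?exprn_gt0 ?ltr0n.
Qed.

Lemma fed_step_mse : exists2 C, 0 <= C & forall mu w, 0 < mu <= 1 ->
  fexp (fstep mu w) (fun v => norm2 (wo - v))
  <= (1 - nu * mu + C * mu ^+ 2) * norm2 (wo - w) + C * mu ^+ 2 * sigma_s2.
Proof.
have [C C_ge0 contraction] := fed_step_contraction.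
pose g := \sum_k (E k)%:R * (B k)%:R * K%:R ^+ 2 * p k / 6.
have g_ge0 : 0 <= g.
  apply: sumr_ge0 => k _; apply: divr_ge0 _ (ler0n _ 6).
  exact: mulr_ge0 (mulr_ge0 (mulr_ge0 (ler0n _ _) (ler0n _ _)) (sqr_ge0 _)) (ltW (p_gt0 k)).
have moment_le : \sum_k grad_moment k wo <= g * sigma_s2.
  by rewrite mulr_suml; apply: ler_sum => k _; exact: grad_moment_le_sigma_s2.
exists (C + C * g) => [|mu w mu01]; first exact: addr_ge0 C_ge0 (mulr_ge0 C_ge0 g_ge0).
apply: le_trans (contraction mu w mu01) _; rewrite (norm2BC w wo).
have Cmu_ge0 := mulr_ge0 C_ge0 (sqr_ge0 mu).
have := ler_wpM2l Cmu_ge0 moment_le.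
have := mulr_ge0 (mulr_ge0 Cmu_ge0 g_ge0) (norm2_ge0 (wo - w)).
have := mulr_ge0 Cmu_ge0 sigma_s2_ge0.
lra.
Qed.

Lemma isfedavg_mse_succ mu lam c i w0 :
  (forall w, fexp (fstep mu w) (fun v => norm2 (wo - v)) <= lam * norm2 (wo - w) + c) ->
  fexp (iterate mu i.+1 w0) (fun v => norm2 (wo - v))
  <= lam * fexp (iterate mu i w0) (fun v => norm2 (wo - v)) + c.
Proof.
move=> step; rewrite /= fexp_bind.
apply: le_trans (ler_fexp (is_prob_isfedavg _ _ _) step) _.
by rewrite fexpD fexpZ (fexp_cst _ (is_prob_isfedavg _ _ _)).
Qed.

End Convergence.

Lemma geometric_recursion (R : realFieldType) (lam c : R) (x : nat -> R) :
  0 <= lam < 1 -> 0 <= c -> (forall i, x i.+1 <= lam * x i + c) ->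
  forall i, x i <= lam ^+ i * x 0%N + c / (1 - lam).
Proof.
move=> /andP [lam_ge0 lam_lt1] c_ge0 step; have gap : 0 < 1 - lam by rewrite subr_gt0.
elim=> [|i IH]; first by rewrite expr0 mul1r lerDl divr_ge0 // ltW.
apply: le_trans (step i) _; apply: le_trans (lerD (ler_wpM2l lam_ge0 IH) (lexx c)) _.
have -> : lam * (lam ^+ i * x 0%N + c / (1 - lam)) + c = lam ^+ i.+1 * x 0%N + c / (1 - lam).
  by rewrite exprS; field; rewrite gt_eqF.
by [].
Qed.

Lemma small_step_size (R : realFieldType) (a b : R) : 0 < a -> 0 <= b ->
  exists2 mu0, 0 < mu0 & forall mu, 0 < mu <= mu0 ->
  [/\ mu <= 1, 0 <= 1 - a * mu + b * mu ^+ 2 & a * mu / 2 <= a * mu - b * mu ^+ 2].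
Proof.
move=> a_gt0 b_ge0; have D_gt0 : 0 < 1 + a ^+ 2 + 2 * b by have := sqr_ge0 a; lra.
(* This choice of mu0 gives a mu <= 1, 2 b mu <= a and mu <= 1/2. *)
exists (a / (1 + a ^+ 2 + 2 * b)) => [|mu /andP [mu_gt0]]; first exact: divr_gt0.
rewrite ler_pdivlMr // => mu_le.
have mua2_ge0 := mulr_ge0 (ltW mu_gt0) (sqr_ge0 a).
have a_mu_le1 : a * mu <= 1 by nra.
have b_mu_le : 2 * b * mu <= a by nra.
have := mulr_ge0 (ltW mu_gt0) (sqr_ge0 (a - 1)).
split; nra.
Qed.

Lemma noise_floor_le (R : realFieldType) (a c mu s lam : R) :
  0 < a -> 0 < mu -> 0 <= c -> 0 <= s -> a * mu / 2 <= 1 - lam ->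
  c * mu ^+ 2 * s / (1 - lam) <= 2 * c / a * mu * s.
Proof.
move=> a_gt0 mu_gt0 c_ge0 s_ge0 gap.
have gap_gt0 : 0 < 1 - lam by apply: lt_le_trans gap; rewrite divr_gt0 ?mulr_gt0.
rewrite ler_pdivrMr //; apply: le_trans (ler_wpM2l _ gap).
  by rewrite le_eqVlt; apply/orP; left; apply/eqP; field; rewrite gt_eqF.
exact: mulr_ge0 (mulr_ge0 (divr_ge0 (mulr_ge0 (ler0n _ 2) c_ge0) (ltW a_gt0))
  (ltW mu_gt0)) s_ge0.
Qed.
Theorem theorem1 (R : realType) (M K : nat) (N : 'I_K -> nat)
  (Q : forall k : 'I_K, 'I_(N k) -> 'rV[R]_M -> R)
  (gQ : forall k : 'I_K, 'I_(N k) -> 'rV[R]_M -> 'rV[R]_M)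
  (nu delta xi : R) (wo : 'rV[R]_M) (wko : 'I_K -> 'rV[R]_M)
  (p : 'I_K -> R) (pn : forall k : 'I_K, 'I_(N k) -> R)
  (E B : 'I_K -> nat) (L : nat)
  (piL : {set 'I_K} -> R) (piB : forall k : 'I_K, {set 'I_(N k)} -> R)
  (w0 : 'rV[R]_M) :
  (* setting *)
  (0 < K)%N -> (0 < L)%N ->
  (forall k, (0 < E k)%N) -> (forall k, (0 < B k)%N) ->
  (forall k n, has_gradient (Q k n) (gQ k n)) ->
  (* Assumption A *)
  0 < nu -> 0 <= delta ->
  (forall k, strongly_convex nu (emp_risk Q k)) ->
  (forall k n, convex_fun (Q k n)) ->
  (forall k n, lipschitz_grad delta (gQ k n)) ->
  (* minimizers *)
  is_minimizer (fun w => (K%:R)^-1 * \sum_(k < K) emp_risk Q k w) wo ->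
  (forall k, is_minimizer (emp_risk Q k) (wko k)) ->
  (* Assumption B *)
  0 <= xi -> (forall k, norm2 (wko k - wo) <= xi ^+ 2) ->
  (* sampling of agents and of data, without replacement *)
  (forall k, 0 < p k) -> \sum_(k < K) p k = 1 ->
  (forall k n, 0 < pn k n) -> (forall k, \sum_(n < N k) pn k n = 1) ->
  sampling_design L p piL ->
  (forall k, sampling_design (B k) (pn k) (piB k)) ->
  (* conclusion: for sufficiently small mu, exponential convergence in MSE *)
  exists mu0 : R, 0 < mu0 /\
  exists a b c1 c2 c3 : R,
    [/\ 0 <= a, 0 <= b, 0 <= c1, 0 <= c2 & 0 <= c3] /\
    forall mu : R, 0 < mu <= mu0 ->
      let lam := 1 - a * mu + b * mu ^+ 2 in
      0 <= lam < 1 /\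
      forall i : nat,
        fexp (isfedavg gQ p pn E B L mu piL piB i w0) (fun w => norm2 (wo - w))
        <= c1 * lam ^+ i
           + c2 * mu * (sigma_s2 gQ p pn E B wo + xi ^+ 2)
           + c3 * mu ^+ 2 * ((K%:R)^-1 * \sum_(k < K) sigma_qk2 gQ pn B k (wko k)).
Proof.
(* The bound holds with c3 = 0 and without convexity of the Q_k(.; x), the local
   minimizers wko or Assumption B: the client drift is already controlled by the
   O(mu) sigma_s^2 term. *)
move=> K_gt0 L_gt0 E_gt0 B_gt0 gradQ nu_gt0 _ scP _ lipQ wo_min _ xi_ge0 _
  p_gt0 p_sum1 pn_gt0 pn_sum1 designL designB.
have N_gt0 k := ord_sum_eq1_gt0 (pn_sum1 k).
have [C C_ge0 mse] := fed_step_mse K_gt0 E_gt0 B_gt0 N_gt0 p_gt0 pn_gt0 designB lipQ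
  L_gt0 designL p_sum1 nu_gt0 (fun k u v => grad_risk_strongly_monotone gradQ u v (scP k))
  (sum_grad_risk_minimizer gradQ K_gt0 wo_min).
have [mu0 mu0_gt0 small] := small_step_size nu_gt0 C_ge0.
exists mu0; split => //; exists nu, C, (norm2 (wo - w0)), (2 * C / nu), 0.
split; first by split; rewrite ?norm2_ge0 ?divr_ge0 ?mulr_ge0 // ltW.
move=> mu mu_range lam; have [mu_le1 lam_ge0 gap] := small mu mu_range.
have /andP [mu_gt0 _] := mu_range; have numu_gt0 := mulr_gt0 nu_gt0 mu_gt0.
have lam_range : 0 <= lam < 1 by rewrite lam_ge0 /lam; lra.
split=> // i; set s := sigma_s2 gQ p pn E B wo + xi ^+ 2.
have s_ge0 : 0 <= s by rewrite addr_ge0 ?sqr_ge0 ?sigma_s2_ge0.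
have step w : fexp (fed_step gQ p pn E B L mu piL piB w) (fun v => norm2 (wo - v))
    <= lam * norm2 (wo - w) + C * mu ^+ 2 * s.
  apply: le_trans (mse mu w _) _; first by rewrite mu_gt0.
  rewrite lerD2l; apply: ler_wpM2l; first exact: mulr_ge0 C_ge0 (sqr_ge0 mu).
  by rewrite lerDl sqr_ge0.
have := geometric_recursion lam_range (mulr_ge0 (mulr_ge0 C_ge0 (sqr_ge0 mu)) s_ge0)
  (fun i => isfedavg_mse_succ designB designL i w0 step) i.
rewrite /= fexp_dirac mul0r mul0r addr0 [norm2 _ * _]mulrC => /le_trans; apply.
by rewrite lerD2l noise_floor_le //; rewrite /lam; lra.
Qed.
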